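(* Let $A\in\mathbb{C}^{n\times n}$, $B\in\mathbb{C}^{n\times m}$, $C\in\mathbb{C}^{p\times n}$, $D\in\mathbb{C}^{p\times m}$, $F\in\mathbb{C}^{\nu\times\nu}$ with $\mathrm{eig}(A)\cap\mathrm{eig}(F)=\emptyset$, and let $H\in\mathbb{C}^{m\times\nu}$ be such that $(F,H)$ is observable. Let $\hat B\in\mathbb{C}^{\nu\times m}$ and $\hat D\in\mathbb{C}^{p\times m}$, and define $\hat A=F-\hat BH$ and $\hat C=\mathcal{C}_{\rm p}(H)-\hat DH$. Suppose $\mathrm{eig}(\hat A)\cap\mathrm{eig}(F)=\emptyset$ and that the matrix $$\begin{bmatrix}F-\lambda I_\nu & \hat B\\ \mathcal{C}_{\rm p}(H) & \hat D\end{bmatrix}$$ has full column rank for every $\lambda\in\mathrm{eig}(\hat A)$. Then the pair $(\hat A,\hat C)$ is observable.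
   Context: The primal SSC operator: for $H\in\mathbb{C}^{m\times\nu}$, $\mathcal{C}_{\rm p}(H)=C\Pi+DH$, where $\Pi\in\mathbb{C}^{n\times\nu}$ is the unique solution of $\Pi F-A\Pi=BH$. *)

From HB Require Import structures.
From mathcomp Require Import all_boot all_order all_algebra.
From mathcomp Require Import complex.
From mathcomp Require Import reals.
Set Implicit Arguments. Unset Strict Implicit. Unset Printing Implicit Defensive.
Import Order.TTheory GRing.Theory Num.Theory.
Local Open Scope ring_scope.

Definition obsmx (K : fieldType) (nu m : nat) (F : 'M[K]_nu) (H : 'M[K]_(m, nu))
  : 'M[K]_(\sum_(i < nu) m, nu) :=
  \mxcol_(i < nu) (H *m F ^+ i).

Definition observable (K : fieldType) (nu m : nat) (F : 'M[K]_nu) (H : 'M[K]_(m, nu)) : Prop :=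
  \rank (obsmx F H) = nu.

Definition eig_disjoint (K : fieldType) (n k : nat) (A : 'M[K]_n) (F : 'M[K]_k) : Prop :=
  forall lambda : K, eigenvalue A lambda -> ~~ eigenvalue F lambda.

(* Primal SSC operator C_p(H) = C Pi + D H, where Pi solves Pi F - A Pi = B H
   (the solution Pi is passed explicitly; it is unique when eig A, eig F disjoint). *)
Definition Cp (K : fieldType) (n m p nu : nat) (C : 'M[K]_(p, n)) (D : 'M[K]_(p, m))
  (Pi : 'M[K]_(n, nu)) (H : 'M[K]_(m, nu)) : 'M[K]_(p, nu) :=
  C *m Pi + D *m H.

From HB Require Import structures.
From mathcomp Require Import all_boot all_order all_algebra.
From mathcomp Require Import complex.
From mathcomp Require Import reals.
Set Implicit Arguments. Unset Strict Implicit. Unset Printing Implicit Defensive.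
Import Order.TTheory GRing.Theory Num.Theory.
Local Open Scope ring_scope.
Local Open Scope complex_scope.

(* By the Popov-Belevitch-Hautus test it suffices to show that no eigenvector
   y of Ah = F - Bh H satisfies Ch y = 0.  For such a y with eigenvalue a, the
   stacked vector [y; -H y] lies in the kernel of
   [F - a I, Bh; C_p(H), Dh], because (F - a I) y = Bh H y and
   C_p(H) y = Dh H y; full column rank of that matrix forces y = 0.
   The PBH test itself is proved by picking an eigenvector of Ah inside the
   unobservable subspace, which is Ah-invariant by Cayley-Hamilton. *)

Lemma mulmx_exp_eq0_char_poly (K : fieldType) n p k
    (A : 'M[K]_n) (C : 'M[K]_(p, n)) (Y : 'M[K]_(n, k)) :
  (forall i, (i < n)%N -> C *m A ^+ i *m Y = 0) ->
  forall j, C *m A ^+ j *m Y = 0.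
Proof.
case: n A C Y => [|n'] A C Y CAY0 j; first by rewrite [Y]flatmx0 mulmx0.
have Aj : A ^+ j = horner_mx A ('X^j %% char_poly A).
  rewrite -{1}(horner_mx_X A) -rmorphXn /= {1}(divp_eq 'X^j (char_poly A)).
  by rewrite rmorphD rmorphM /= Cayley_Hamilton mulr0 add0r.
have size_rem : (size ('X^j %% char_poly A)%R <= n'.+1)%N.
  by rewrite -ltnS -(size_char_poly A) ltn_modp -size_poly_eq0 size_char_poly.
rewrite Aj -(coefK ('X^j %% _)) poly_def linear_sum /= mulmx_sumr mulmx_suml.
rewrite big1 // => i _; rewrite linearZ /= rmorphXn /= horner_mx_X.
by rewrite -scalemxAr -scalemxAl CAY0 ?scaler0 // (leq_trans (ltn_ord i)).
Qed.

Section Observability.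

Variables (K : fieldType) (n p : nat) (A : 'M[K]_n) (C : 'M[K]_(p, n)).

(* Rows w of [unobs_space] are the transposes of the columns y with
   obsmx A C *m y = 0. *)
Definition unobs_space : 'M[K]_n := kermx (obsmx A C)^T.

Lemma sub_unobs_space (w : 'rV[K]_n) :
  (w <= unobs_space)%MS <-> forall i : 'I_n, C *m A ^+ i *m w^T = 0.
Proof.
split=> [/sub_kermxP/(congr1 trmx) | CAw0].
  rewrite trmx_mul trmxK trmx0 /obsmx mxcol_mul => CAw0 i.
  by have := congr1 (fun X => submxcol X i) CAw0; rewrite mxcolK submxcol0.
apply/sub_kermxP/trmx_inj; rewrite trmx_mul trmxK trmx0 /obsmx mxcol_mul.
by rewrite -(mxcol0 (p_ := fun _ => p)); apply: eq_mxcol.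
Qed.

Lemma unobs_space_exp (w : 'rV[K]_n) j :
  (w <= unobs_space)%MS -> C *m A ^+ j *m w^T = 0.
Proof.
move/sub_unobs_space=> CAw0; apply: mulmx_exp_eq0_char_poly => i lt_i_n.
exact: (CAw0 (Ordinal lt_i_n)).
Qed.

Lemma stablemx_unobs_space : stablemx unobs_space A^T.
Proof.
apply/row_subP=> r; rewrite row_mul; apply/sub_unobs_space=> i.
rewrite trmx_mul trmxK mulmxA -(mulmxA C) mulmxE -exprSr.
exact/unobs_space_exp/row_sub.
Qed.

Lemma mxrank_unobs_space : \rank unobs_space = (n - \rank (obsmx A C))%N.
Proof. by rewrite mxrank_ker mxrank_tr. Qed.

End Observability.

Lemma eigenvalue_tr (K : fieldType) n (A : 'M[K]_n) a :
  eigenvalue A^T a = eigenvalue A a.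
Proof.
rewrite /eigenvalue /eigenspace -!mxrank_eq0 !mxrank_ker.
by rewrite -(mxrank_tr (A - a%:M)) raddfB /= tr_scalar_mx.
Qed.

Lemma eigenvalue_col (K : fieldType) n (A : 'M[K]_n) a (y : 'cV[K]_n) :
  A *m y = a *: y -> y != 0 -> eigenvalue A a.
Proof.
move=> Ay y_neq0; rewrite -eigenvalue_tr; apply/eigenvalueP; exists y^T.
  by rewrite -trmx_mul Ay linearZ.
by rewrite -trmx0 (inj_eq trmx_inj).
Qed.

Lemma unobservable_eigenvector (K : numClosedFieldType) n p
    (A : 'M[K]_n) (C : 'M[K]_(p, n)) :
  ~ observable A C ->
  exists a (y : 'cV[K]_n), [/\ y != 0, A *m y = a *: y & C *m y = 0].
Proof.
move=> not_obs; set S := unobs_space A C.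
have rankS_gt0 : (0 < \rank S)%N.
  rewrite mxrank_unobs_space subn_gt0 ltn_neqAle rank_leq_col andbT.
  exact/eqP.
have [a /eigenvalueP[v Av v_neq0]] :=
  eigenvalue_closed (conjmx (row_base S) A^T) rankS_gt0.
set w := v *m row_base S.
have wS : (w <= S)%MS by rewrite (submx_trans (submxMl _ _)) ?eq_row_base.
have /eigenspaceP wA : (w <= eigenspace A^T a)%MS.
  rewrite -sub_eigenspace_conjmx ?stablemx_row_base ?row_base_free //.
    exact/eigenspaceP.
  exact: stablemx_unobs_space.
exists a, w^T; split.
- by rewrite -trmx0 (inj_eq trmx_inj) mulmx_free_eq0 ?row_base_free.
- by rewrite -[A]trmxK -trmx_mul wA linearZ.
- by have := unobs_space_exp 0 wS; rewrite expr0 mulmx1.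
Qed.

Lemma observable_PBH (K : numClosedFieldType) n p
    (A : 'M[K]_n) (C : 'M[K]_(p, n)) :
  (forall a (y : 'cV[K]_n), y != 0 -> A *m y = a *: y -> C *m y != 0) ->
  observable A C.
Proof.
move=> PBH; apply/eqP/contraT => /eqP/unobservable_eigenvector[a [y [y_neq0 Ay Cy]]].
by move: (PBH a y y_neq0 Ay); rewrite Cy eqxx.
Qed.

Lemma mulmx_col_rank_eq0 (K : fieldType) p q (M : 'M[K]_(p, q)) (z : 'cV[K]_q) :
  \rank M = q -> M *m z = 0 -> z = 0.
Proof.
move=> rankM Mz; apply: trmx_inj; apply/eqP; rewrite trmx0.
by rewrite -(mulmx_free_eq0 _ (_ : row_free M^T)) -?trmx_mul ?Mz ?trmx0 //
  /row_free mxrank_tr rankM.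
Qed.

Lemma feedback_eigenvector_eq0 (K : fieldType) nu m p (F : 'M[K]_nu)
    (Bh : 'M[K]_(nu, m)) (H : 'M[K]_(m, nu)) (Cpm : 'M[K]_(p, nu))
    (Dh : 'M[K]_(p, m)) a (y : 'cV[K]_nu) :
  \rank (block_mx (F - a%:M) Bh Cpm Dh) = (nu + m)%N ->
  (F - Bh *m H) *m y = a *: y -> (Cpm - Dh *m H) *m y = 0 -> y = 0.
Proof.
move=> full_rank Ay Cy.
suff /eqP : col_mx y (- (H *m y)) = 0 by rewrite col_mx_eq0 => /andP[/eqP].
apply: mulmx_col_rank_eq0 full_rank _.
rewrite mul_block_col !mulmxN !mulmxA -!mulmxBl Cy.
by rewrite addrAC mulmxBl Ay mul_scalar_mx subrr col_mx0.
Qed.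

Theorem theorem4 (R : realType) (n m p nu : nat)
  (A : 'M[R[i]]_n) (B : 'M[R[i]]_(n, m)) (C : 'M[R[i]]_(p, n)) (D : 'M[R[i]]_(p, m))
  (F : 'M[R[i]]_nu) (H : 'M[R[i]]_(m, nu))
  (Pi : 'M[R[i]]_(n, nu))
  (Bh : 'M[R[i]]_(nu, m)) (Dh : 'M[R[i]]_(p, m)) :
  eig_disjoint A F ->
  observable F H ->
  Pi *m F - A *m Pi = B *m H ->
  let Ah := F - Bh *m H in
  let Ch := Cp C D Pi H - Dh *m H in
  eig_disjoint Ah F ->
  (forall lambda : R[i], eigenvalue Ah lambda ->
     \rank (block_mx (F - lambda%:M) Bh (Cp C D Pi H) Dh) = (nu + m)%N) ->
  observable Ah Ch.
Proof.
move=> _ _ _ Ah Ch _ full_rank; apply: observable_PBH => a y y_neq0 Ay.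
have /full_rank rank_a := eigenvalue_col Ay y_neq0.
apply/eqP=> Cy; move/eqP: y_neq0; apply.
exact: (feedback_eigenvector_eq0 (H := H) (Dh := Dh) rank_a).
Qed.
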